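(* Let $\mathcal{D}$ be a finite set of disks in the plane, and let $(C_1,C_2)$ be a pair of congruent disks of smallest possible common radius such that every $D\in\mathcal{D}$ intersects $C_1$ or $C_2$. Assume the centers of $C_1$ and $C_2$ are distinct and let $\ell$ be the perpendicular bisector of the segment connecting them. Then for $i\in\{1,2\}$, $C_i\cap D\neq\emptyset$ for every $D\in\mathcal{D}$ whose center lies on the same (closed) side of $\ell$ as the center of $C_i$.
   Context: Disks are closed disks in the plane. The paper assumes throughout that no disk of $\mathcal{D}$ contains another disk of $\mathcal{D}$. *)

From Stdlib Require Import Reals List.
Open Scope R_scope.

Definition point := (R * R)%type.

(* A closed disk: center and radius (radius >= 0 required where used). *)
Record disk := mkDisk { center : point; radius : R }.

Definition dist2 (p q : point) : R :=
  (fst p - fst q) * (fst p - fst q) + (snd p - snd q) * (snd p - snd q).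

Definition in_disk (D : disk) (p : point) : Prop :=
  dist2 p (center D) <= radius D * radius D.

Definition intersects (D E : disk) : Prop :=
  exists p, in_disk D p /\ in_disk E p.

Definition disk_contains (D E : disk) : Prop :=
  forall p, in_disk E p -> in_disk D p.

Definition valid_family (Ds : list disk) : Prop :=
  (forall D, In D Ds -> 0 <= radius D) /\
  (forall D E, In D Ds -> In E Ds -> D <> E -> ~ disk_contains D E).

Definition stabs2 (Ds : list disk) (c1 c2 : point) (r : R) : Prop :=
  forall D, In D Ds -> intersects (mkDisk c1 r) D \/ intersects (mkDisk c2 r) D.

Definition optimal_pair (Ds : list disk) (c1 c2 : point) (r : R) : Prop :=
  0 <= r /\ stabs2 Ds c1 c2 r /\
  (forall c1' c2' r', 0 <= r' -> stabs2 Ds c1' c2' r' -> r <= r').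

(* Closed side of the perpendicular bisector of [a b] that contains a:
   points p with (p - m) . (a - b) >= 0, m the midpoint of [a b]. *)
Definition bisector_side (a b p : point) : Prop :=
  let m := ((fst a + fst b) / 2, (snd a + snd b) / 2) in
  (fst p - fst m) * (fst a - fst b) + (snd p - snd m) * (snd a - snd b) >= 0.

(** If [D] meets [C2] at [q] and the center [p] of [D] lies on the side of
    [c1], then [D] meets [C1] too: either [q] itself lies on the side of [c1],
    hence is at least as close to [c1] as to [c2]; or the mirror image [q'] of
    [q] in the bisector is at distance [|q - c2|] from [c1], and, [p] and [q']
    being on the same side, [q'] is at least as close to [p] as [q] is. *)
From Stdlib Require Import Reals List Lra Psatz.
Open Scope R_scope.

Lemma dist2_pos (p q : point) : p <> q -> 0 < dist2 p q.
Proof.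
  destruct p as [x1 y1], q as [x2 y2]; unfold dist2; simpl; intros Hne.
  destruct (Req_dec x1 x2), (Req_dec y1 y2); try nra.
  subst; contradiction.
Qed.

Lemma dist2_comm (p q : point) : dist2 p q = dist2 q p.
Proof. unfold dist2; ring. Qed.

Section Bisector.

Variables a b : point.

(* The signed distance of [p] to the bisector of [a b], times [|a - b|]. *)
Definition bisector_value (p : point) : R :=
  (fst p - (fst a + fst b) / 2) * (fst a - fst b)
  + (snd p - (snd a + snd b) / 2) * (snd a - snd b).

Lemma bisector_sideE (p : point) :
  bisector_side a b p <-> bisector_value p >= 0.
Proof. reflexivity. Qed.

Lemma dist2_sub_bisector_value (p : point) :
  dist2 p b - dist2 p a = 2 * bisector_value p.
Proof. unfold dist2, bisector_value; field. Qed.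

Hypothesis a_neq_b : a <> b.

Definition reflect_bisector (q : point) : point :=
  let t := 2 * bisector_value q / dist2 a b in
  (fst q - t * (fst a - fst b), snd q - t * (snd a - snd b)).

Lemma dist2_reflect_bisector_l (q : point) :
  dist2 (reflect_bisector q) a = dist2 q b.
Proof.
  pose proof (dist2_pos a b a_neq_b) as Hab.
  unfold reflect_bisector, bisector_value, dist2 in *; simpl; field; lra.
Qed.

Lemma dist2_reflect_bisector (p q : point) :
  dist2 p (reflect_bisector q)
  = dist2 p q + 4 * bisector_value q * bisector_value p / dist2 a b.
Proof.
  pose proof (dist2_pos a b a_neq_b) as Hab.
  unfold reflect_bisector, bisector_value, dist2 in *; simpl; field; lra.
Qed.

Lemma dist2_reflect_bisector_le (p q : point) :
  bisector_value q < 0 -> bisector_value p >= 0 ->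
  dist2 p (reflect_bisector q) <= dist2 p q.
Proof.
  intros Hq Hp; rewrite dist2_reflect_bisector.
  pose proof (dist2_pos a b a_neq_b) as Hab.
  enough (4 * bisector_value q * bisector_value p / dist2 a b <= 0) by lra.
  assert (Hinv : 0 < / dist2 a b) by (apply Rinv_0_lt_compat; lra).
  assert (Hsign : 4 * bisector_value q * bisector_value p <= 0) by nra.
  unfold Rdiv; nra.
Qed.

Lemma intersects_bisector_side (r : R) (D : disk) :
  bisector_side a b (center D) ->
  intersects (mkDisk b r) D -> intersects (mkDisk a r) D.
Proof.
  rewrite bisector_sideE; intros Hp [q [Hqb HqD]].
  unfold intersects, in_disk in *; simpl in *.
  destruct (Rle_or_lt 0 (bisector_value q)) as [Hq | Hq].
  - exists q; split; [| exact HqD].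
    pose proof (dist2_sub_bisector_value q); lra.
  - exists (reflect_bisector q); split.
    + rewrite dist2_reflect_bisector_l; exact Hqb.
    + rewrite dist2_comm; rewrite dist2_comm in HqD.
      pose proof (dist2_reflect_bisector_le (center D) q Hq Hp); lra.
Qed.

End Bisector.

Theorem mainTheorem13 (Ds : list disk) (c1 c2 : point) (r : R) :
  valid_family Ds ->
  optimal_pair Ds c1 c2 r ->
  c1 <> c2 ->
  (forall D, In D Ds -> bisector_side c1 c2 (center D) ->
     intersects (mkDisk c1 r) D) /\
  (forall D, In D Ds -> bisector_side c2 c1 (center D) ->
     intersects (mkDisk c2 r) D).
Proof.
  intros _ [_ [Hstab _]] Hne.
  split; intros D HD Hside; destruct (Hstab D HD) as [H | H]; auto.
  - exact (intersects_bisector_side c1 c2 Hne r D Hside H).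
  - exact (intersects_bisector_side c2 c1 (not_eq_sym Hne) r D Hside H).
Qed.
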